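(* Let $p$ be an odd prime and let $L$ be a $\mathbb{Z}_p$-lattice of rank $k\ge 4$ with $L\simeq\langle \epsilon_1,p^{e_2}\epsilon_2,p^{e_3}\epsilon_3,\dots,p^{e_k}\epsilon_k\rangle$, where $0\le e_2\le e_3\le\cdots\le e_k$ and $\epsilon_i\in\mathbb{Z}_p^\times$. If $\nu_p(\langle\epsilon_1,p^{e_2}\epsilon_2,p^{e_3}\epsilon_3\rangle)<\infty$ (i.e., this ternary lattice is isotropic), then $\nu_p(L)\le \nu'_p(L)+1$.
   Context: $\langle a_1,\dots,a_k\rangle$ denotes the $\mathbb{Z}_p$-lattice with diagonal Gram matrix $\mathrm{diag}(a_1,\dots,a_k)$; $Q(\mathbf x)=B(\mathbf x,\mathbf x)$; $a$ is represented by $L$ if $a=Q(\mathbf x)$ for some $\mathbf x\in L$. For odd $p$, $SC_p=\{1,\Delta_p,p,p\Delta_p\}$ with $\Delta_p$ a non-square unit. For $L$ of rank $\ge4$ (or an isotropic ternary lattice) and $s\in SC_p$, let $u\ge0$ be least with $sp^{2u}$ represented by $L$; $\nu_{p,s}(L)=\mathrm{ord}_p(sp^{2u})$; $\nu_p(L)=\max_{s}\nu_{p,s}(L)$; $\nu'_p(L)=\max\{\nu_{p,s}(L): s\in SC_p\setminus\{s_0\}\}$ for any $s_0$ with $\nu_{p,s_0}(L)=\nu_p(L)$. For an anisotropic ternary $\mathbb{Z}_p$-lattice $K$ one sets $\nu_p(K)=\infty$. *)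

(* p-adic integers are modelled honestly as the inverse limit
   lim Z/p^n Z: a p-adic integer is a sequence x : nat -> int of approximations
   with x (n+1) = x n (mod p^n); two such sequences denote the same element of
   Z_p iff they agree mod p^n for every n. *)
From mathcomp Require Import all_boot all_order all_algebra.
Set Implicit Arguments. Unset Strict Implicit. Unset Printing Implicit Defensive.
Import Order.TTheory GRing.Theory Num.Theory.
Local Open Scope ring_scope.

Definition is_zp (p : nat) (x : nat -> int) : Prop :=
  forall n : nat, (x n.+1 == x n %[mod (p ^ n)%:Z])%Z.

Definition zp_eq (p : nat) (x y : nat -> int) : Prop :=
  forall n : nat, (x n == y n %[mod (p ^ n)%:Z])%Z.

Definition zp_of_int (a : int) : nat -> int := fun _ => a.

Definition zp_mul (x y : nat -> int) : nat -> int := fun n => x n * y n.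

Definition zp_unit (p : nat) (x : nat -> int) : Prop :=
  is_zp p x /\ ~~ (p%:Z %| x 1%N)%Z.

Definition zp_nonzero (p : nat) (x : nat -> int) : Prop :=
  exists n : nat, ~~ ((p ^ n)%:Z %| x n)%Z.

Definition zp_square (p : nat) (x : nat -> int) : Prop :=
  exists y : nat -> int, is_zp p y /\ zp_eq p (zp_mul y y) x.

Definition diag_Q (k : nat) (d x : nat -> nat -> int) : nat -> int :=
  fun n => \sum_(i < k) d i n * (x i n) ^+ 2.

Definition represents (p k : nat) (d : nat -> nat -> int) (a : nat -> int) : Prop :=
  exists x : nat -> nat -> int,
    (forall i, (i < k)%N -> is_zp p (x i)) /\ zp_eq p (diag_Q k d x) a.

Definition isotropic (p k : nat) (d : nat -> nat -> int) : Prop :=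
  exists x : nat -> nat -> int,
    (forall i, (i < k)%N -> is_zp p (x i)) /\
    (exists i, (i < k)%N /\ zp_nonzero p (x i)) /\
    zp_eq p (diag_Q k d x) (zp_of_int 0).

(* The square classes SC_p = {1, Delta, p, p Delta}, indexed by 'I_4 *)
Definition sc_val (p : nat) (Delta : nat -> int) (s : 'I_4) : nat -> int :=
  match val s with
  | 0 => zp_of_int 1
  | 1 => Delta
  | 2 => zp_of_int p%:Z
  | _ => zp_mul (zp_of_int p%:Z) Delta
  end.

Definition sc_ord (s : 'I_4) : nat := if (2 <= val s)%N then 1 else 0.

(* nu_{p,s}(L) = v : with u least such that s p^(2u) is represented by L,
   v = ord_p(s p^(2u)) = ord_p(s) + 2u *)
Definition nu_s_spec (p k : nat) (d : nat -> nat -> int) (Delta : nat -> int)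
    (s : 'I_4) (v : nat) : Prop :=
  exists u : nat,
    v = (sc_ord s + 2 * u)%N /\
    represents p k d (zp_mul (sc_val p Delta s) (zp_of_int (p ^ (2 * u))%:Z)) /\
    (forall u' : nat, (u' < u)%N ->
       ~ represents p k d (zp_mul (sc_val p Delta s) (zp_of_int (p ^ (2 * u'))%:Z))).

Definition diag_entries (p : nat) (e : nat -> nat) (eps : nat -> nat -> int)
  : nat -> nat -> int :=
  fun i => zp_mul (zp_of_int (p ^ e i)%:Z) (eps i).

From mathcomp Require Import all_boot all_order all_algebra.
From mathcomp Require Import ring zify.
Import Order.TTheory GRing.Theory Num.Theory.
Set Implicit Arguments. Unset Strict Implicit. Unset Printing Implicit Defensive.
Local Open Scope ring_scope.

(* Suppose nu_{s0}(L) >= nu'(L) + 2 and put t = nu_{s0}(L) - 2: every other square class is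
   represented at order at most t, and we show that s0 p^t is represented, against the
   minimality defining nu_{s0}.  A primitive isotropic vector whose unit coordinate i has
   e_i <= t yields every element of p^t Z_p.  The isotropic ternary part provides a primitive
   isotropic vector; if its unit coordinate has e_i > t, then e_i > t for all i >= 2, so modulo
   p^(t+1) only the binary part <eps_0, p^(e_1) eps_1> contributes.  It represents the other
   class of the order of s0 at order t and the two classes of the other order, with unit parts
   1 and Delta, at order t - 1.  Comparing valuations in these three representations forces
   e_1 even, e_1 <= t and <eps_0, eps_1> isotropic mod p; Hensel's lemma lifts this to an
   isotropic vector with unit coordinate 1, and the first argument applies again. *)

Definition invz_mod (x d : int) : int := projT1 (Bezoutz x d).

Lemma invz_modP (x d : int) : coprimez x d -> (d %| x * invz_mod x d - 1)%Z.
Proof.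
rewrite /coprimez /invz_mod; case: (Bezoutz x d) => u [v /= huv] /eqP hg.
rewrite hg in huv.
have -> : x * u - 1 = - (v * d) by rewrite -huv; ring.
by rewrite rpredN dvdz_mull.
Qed.

Lemma last_true_before (P : pred nat) n : P 0%N -> ~~ P n -> exists m, P m /\ ~~ P m.+1.
Proof.
move=> P0; elim: n => [|n IHn] Pn; first by rewrite P0 in Pn.
by case Pn': (P n); [exists n; rewrite Pn' | apply: IHn; rewrite Pn'].
Qed.

Lemma odd_add_double n m : odd (n + 2 * m) = odd n.
Proof. by rewrite oddD mul2n odd_double addbF. Qed.

Lemma expr_double (R : pzSemiRingType) (x : R) n : x ^+ (2 * n) = x ^+ n * x ^+ n.
Proof. by rewrite mul2n -addnn exprD. Qed.

Lemma dvdz_mul_congr (d a a' b b' : int) :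
  (d %| a - a')%Z -> (d %| b - b')%Z -> (d %| a * b - a' * b')%Z.
Proof.
move=> da db; have -> : a * b - a' * b' = a * (b - b') + (a - a') * b' by ring.
by apply: rpredD; [apply: dvdz_mull | apply: dvdz_mulr].
Qed.

Lemma big_ord_trunc (R : nmodType) k m (F : nat -> R) :
  (m <= k)%N -> (forall i, (m <= i)%N -> F i = 0) -> \sum_(i < k) F i = \sum_(i < m) F i.
Proof.
move=> mk F0; rewrite -(subnKC mk) big_split_ord /= [X in _ + X]big1 ?addr0 // => i _.
by rewrite F0 // leq_addr.
Qed.

Section PadicSequences.

Variable p : nat.
Local Notation P := (p%:Z).

Lemma natz_expn n : ((p ^ n)%N)%:Z = P ^+ n.
Proof. by rewrite -!natz natrX. Qed.

Lemma zp_eqP x y : zp_eq p x y <-> forall n, (P ^+ n %| x n - y n)%Z.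
Proof. by split=> h n; have := h n; rewrite eqz_mod_dvd natz_expn. Qed.

Lemma is_zpP x : is_zp p x <-> forall n, (P ^+ n %| x n.+1 - x n)%Z.
Proof. by split=> h n; have := h n; rewrite eqz_mod_dvd natz_expn. Qed.

Lemma is_zp_dvd_sub x m n : is_zp p x -> (m <= n)%N -> (P ^+ m %| x n - x m)%Z.
Proof.
move=> /is_zpP hx /subnKC <-; elim: (n - m)%N => [|d IHd]; first by rewrite addn0 subrr.
have -> : x (m + d.+1)%N - x m = (x (m + d).+1 - x (m + d)%N) + (x (m + d)%N - x m).
  by rewrite addnS; ring.
apply: rpredD IHd; apply: dvdz_trans (hx _); exact: dvdz_exp2l (leq_addr _ _).
Qed.

Lemma is_zp_const (a : int) : is_zp p (fun _ => a).
Proof. by apply/is_zpP => n; rewrite subrr dvdz0. Qed.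

Lemma is_zpD x y : is_zp p x -> is_zp p y -> is_zp p (fun n => x n + y n).
Proof.
move=> /is_zpP hx /is_zpP hy; apply/is_zpP => n.
have -> : x n.+1 + y n.+1 - (x n + y n) = (x n.+1 - x n) + (y n.+1 - y n) by ring.
exact: rpredD.
Qed.

Lemma is_zpN x : is_zp p x -> is_zp p (fun n => - x n).
Proof.
move=> /is_zpP hx; apply/is_zpP => n.
have -> : - x n.+1 - - x n = - (x n.+1 - x n) by ring.
by rewrite rpredN.
Qed.

Lemma is_zpM x y : is_zp p x -> is_zp p y -> is_zp p (fun n => x n * y n).
Proof.
move=> /is_zpP hx /is_zpP hy; apply/is_zpP => n.
have -> : x n.+1 * y n.+1 - x n * y n = x n.+1 * (y n.+1 - y n) + (x n.+1 - x n) * y n.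
  by ring.
by apply: rpredD; [apply: dvdz_mull | apply: dvdz_mulr].
Qed.

Hypothesis p_prime : prime p.

Lemma prime_dvdzM x y : (P %| x * y)%Z = (P %| x)%Z || (P %| y)%Z.
Proof. by rewrite !dvdzE abszM /= Euclid_dvdM. Qed.

Lemma prime_ndvdz1 : ~~ (P %| 1)%Z.
Proof. by rewrite dvdzE /= Euclid_dvd1. Qed.

Lemma coprimez_prime x : ~~ (P %| x)%Z -> coprimez P x.
Proof. by rewrite coprimezE /= prime_coprime // -dvdzE. Qed.

Lemma expz_prime_neq0 n : P ^+ n != 0.
Proof. by rewrite expf_neq0 // eqz_nat; case: p p_prime. Qed.

Lemma zp_unit_ndvd x n : zp_unit p x -> (0 < n)%N -> ~~ (P %| x n)%Z.
Proof.
case=> hx hx1 hn; apply: contra hx1 => hxn.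
have := is_zp_dvd_sub hx hn; rewrite expr1 => hd.
by rewrite -(subKr (x n) (x 1%N)) rpredB.
Qed.

Lemma zp_unit_const (a : int) : ~~ (P %| a)%Z -> zp_unit p (fun _ => a).
Proof. by split => //; exact: is_zp_const. Qed.

Lemma zp_unitM x y : zp_unit p x -> zp_unit p y -> zp_unit p (fun n => x n * y n).
Proof.
move=> [hx hx1] [hy hy1]; split; first exact: is_zpM.
by rewrite prime_dvdzM negb_or hx1.
Qed.

Lemma zp_unit_inv x : zp_unit p x ->
  exists y, is_zp p y /\ forall n, (P ^+ n %| x n * y n - 1)%Z.
Proof.
move=> ux; pose y n := invz_mod (x n) (P ^+ n).
have cop n : coprimez (P ^+ n) (x n).
  case: n => [|n]; first by rewrite expr0 /coprimez gcd1z.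
  by rewrite coprimezXl // coprimez_prime // zp_unit_ndvd.
have hy n : (P ^+ n %| x n * y n - 1)%Z by rewrite invz_modP // coprimez_sym.
exists y; split=> //; apply/is_zpP => n; rewrite -(Gauss_dvdzr _ (cop n)).
have -> : x n * (y n.+1 - y n) =
  (x n.+1 * y n.+1 - 1) - (x n.+1 - x n) * y n.+1 - (x n * y n - 1) by ring.
have /is_zpP dx := ux.1.
apply: rpredB (hy n); apply: rpredB; last exact: dvdz_mulr (dx n).
exact: dvdz_trans (dvdz_exp2l _ (leqnSn n)) (hy n.+1).
Qed.

Lemma is_zp_div_pexp x m : is_zp p x -> (P ^+ m %| x m)%Z ->
  is_zp p (fun n => (x (n + m)%N %/ P ^+ m)%Z) /\
  forall n, x (n + m)%N = P ^+ m * (x (n + m)%N %/ P ^+ m)%Z.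
Proof.
move=> hx dm; have xE n : x (n + m)%N = P ^+ m * (x (n + m)%N %/ P ^+ m)%Z.
  rewrite mulrC divzK // -(subrK (x m) (x (n + m)%N)) rpredD //.
  by apply: is_zp_dvd_sub hx _; rewrite leq_addl.
split=> //; apply/is_zpP => n; rewrite -(dvdz_mul2l (expz_prime_neq0 m)) mulrBr -!xE.
by rewrite -exprD [(m + n)%N]addnC addSn; exact: (is_zpP x).1 hx (n + m)%N.
Qed.

Hypothesis p_odd : odd p.

Lemma prime_ndvdz2 : ~~ (P %| 2)%Z.
Proof.
rewrite dvdzE /=; apply/negP => /(dvdn_leq (isT : (0 < 2)%N)) p_le2.
have /eqP p2 : p == 2%N by rewrite eqn_leq p_le2 prime_gt1.
by move: p_odd; rewrite p2.
Qed.

Lemma dvdz_expS n : (P %| P ^+ n.+1)%Z.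
Proof. by rewrite exprS dvdz_mulr. Qed.

Lemma zp_square_lift c r : zp_unit p c -> (P %| c 1%N - r ^+ 2)%Z -> zp_square p c.
Proof.
move=> uc cr; have /is_zpP dc := uc.1.
(* Newton's step y -> y + (c - y^2) / 2y, with 1 / 2y only taken modulo p. *)
pose step m y := y + (c m.+2 - y ^+ 2) * invz_mod (2 * y) P.
pose fix ys m := if m is m'.+1 then step m' (ys m') else r.
have inv2 y : ~~ (P %| y)%Z -> (P %| 2 * y * invz_mod (2 * y) P - 1)%Z.
  move=> hy; rewrite invz_modP // coprimez_sym coprimez_prime //.
  by rewrite prime_dvdzM negb_or prime_ndvdz2.
have next_level m y : (P ^+ m.+1 %| c m.+1 - y ^+ 2)%Z -> (P ^+ m.+1 %| c m.+2 - y ^+ 2)%Z.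
  have -> : c m.+2 - y ^+ 2 = (c m.+2 - c m.+1) + (c m.+1 - y ^+ 2) by ring.
  exact: rpredD.
have ys_root m : ~~ (P %| ys m)%Z /\ (P ^+ m.+1 %| c m.+1 - ys m ^+ 2)%Z.
  elim: m => [|m [ym_unit ym_root]] /=.
    split; last by rewrite expr1.
    apply: contra (zp_unit_ndvd uc (ltn0Sn 0)) => pr.
    have -> : c 1%N = (c 1%N - r ^+ 2) + r * r by rewrite expr2; ring.
    by rewrite rpredD // dvdz_mulr.
  set y := ys m in ym_unit ym_root *; set w := invz_mod (2 * y) P.
  have hdelta := next_level _ _ ym_root.
  have Pdelta : (P %| (c m.+2 - y ^+ 2) * w)%Z.
    by rewrite dvdz_mulr // (dvdz_trans (dvdz_expS m) hdelta).
  split.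
    apply: contra ym_unit => hy.
    by rewrite -(addrK ((c m.+2 - y ^+ 2) * w) y) rpredB.
  have -> : c m.+2 - (y + (c m.+2 - y ^+ 2) * w) ^+ 2 =
    - ((c m.+2 - y ^+ 2) * (2 * y * w - 1))
    - ((c m.+2 - y ^+ 2) * (c m.+2 - y ^+ 2)) * w ^+ 2 by ring.
  apply: rpredB; first by rewrite rpredN [P ^+ _]exprSr; apply: dvdz_mul hdelta (inv2 _ ym_unit).
  apply: dvdz_mulr; apply: dvdz_trans (dvdz_mul hdelta hdelta).
  by rewrite -exprD; apply: dvdz_exp2l; lia.
exists (fun n => ys n.-1); split.
  apply/is_zpP => -[|n] /=; first by rewrite expr0 dvd1z.
  rewrite /step addrAC subrr add0r dvdz_mulr // next_level //.
  by case: (ys_root n).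
apply/zp_eqP => -[|n]; first by rewrite expr0 dvd1z.
by rewrite /zp_mul /= -expr2 -opprB rpredN; case: (ys_root n).
Qed.

Lemma zp_nonsquare_mod D n :
  zp_unit p D -> ~ zp_square p D -> (0 < n)%N -> forall t, ~ (P %| D n - t ^+ 2)%Z.
Proof.
move=> uD nsqD n_gt0 t Dt; apply: nsqD; apply: (zp_square_lift (r := t) uD).
have := is_zp_dvd_sub uD.1 n_gt0; rewrite expr1 => dD.
have -> : D 1%N - t ^+ 2 = (D n - t ^+ 2) - (D n - D 1%N) by ring.
exact: rpredB.
Qed.

End PadicSequences.

Definition unit_sq_mod (p : nat) (a C : int) : Prop :=
  exists X, ~~ (p%:Z %| X)%Z /\ (p%:Z %| C - a * X ^+ 2)%Z.

Definition isotropic_mod (p : nat) (a b : int) : Prop :=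
  exists X Y, [/\ ~~ (p%:Z %| X)%Z, ~~ (p%:Z %| Y)%Z & (p%:Z %| a * X ^+ 2 + b * Y ^+ 2)%Z].

(* The possible shapes of p^r C = a X^2 + p^E b Y^2 (mod p^(T+1)) with a, b, C units: the
   term a X^2 or the term p^E b Y^2 has valuation r and carries C, both have valuation r,
   or their leading parts cancel. *)
Definition binary_rep_cases (p T E r : nat) (a b C : int) : Prop :=
  [\/ ~~ odd r /\ unit_sq_mod p a C, odd r = odd E /\ unit_sq_mod p b C,
      ~~ odd r /\ ~~ odd E | [/\ ~~ odd E, (E <= T)%N & isotropic_mod p a b]].

Section PadicValuation.

Variable p : nat.
Hypothesis p_prime : prime p.
Local Notation P := (p%:Z).

Lemma dvdz_pexp_split K x :
  (P ^+ K %| x)%Z \/ exists a X, [/\ (a < K)%N, ~~ (P %| X)%Z & x = P ^+ a * X].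
Proof.
elim: K => [|K [/dvdzP[q ->]|[a [X [aK PX ->]]]]]; first by left; rewrite expr0 dvd1z.
- case Pq: (P %| q)%Z; last by right; exists K, q; rewrite Pq mulrC.
  by left; rewrite exprSr mulrC dvdz_mul2l ?expz_prime_neq0.
- by right; exists a, X; split=> //; exact: leqW.
Qed.

Lemma dvdz_pexp_lead l r K Z W C :
  (r < K)%N -> ~~ (P %| C)%Z -> Z = P ^+ l * W -> (P ^+ K %| Z - P ^+ r * C)%Z ->
  [/\ (l <= r)%N, l = r -> (P %| W - C)%Z & (l < r)%N -> (P %| W)%Z].
Proof.
move=> rK PC ZE dK; have dr : (P ^+ r.+1 %| Z - P ^+ r * C)%Z.
  exact: dvdz_trans (dvdz_exp2l _ rK) dK.
case: (ltngtP l r) => [lr|rl|lr]; last 1 first.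
- split=> [|_|]; rewrite ?lr ?ltnn //.
  by move: dr; rewrite ZE lr -mulrBr exprSr dvdz_mul2l // expz_prime_neq0.
- split=> // [lr'|_]; first by rewrite lr' ltnn in lr.
  have : (P ^+ l.+1 %| Z)%Z.
    rewrite -(subrK (P ^+ r * C) Z); apply: rpredD.
      exact: dvdz_trans (dvdz_exp2l _ (ltnW (lr : l.+1 < r.+1)%N)) dr.
    exact/dvdz_mulr/dvdz_exp2l.
  by rewrite ZE exprSr dvdz_mul2l // expz_prime_neq0.
- exfalso; move/negP: PC; apply.
  have : (P ^+ r.+1 %| P ^+ r * C)%Z.
    rewrite -(subKr Z (P ^+ r * C)); apply: rpredB dr.
    by rewrite ZE; apply/dvdz_mulr/dvdz_exp2l.
  by rewrite exprSr dvdz_mul2l // expz_prime_neq0.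
Qed.

Lemma dvdz_pexp_lead_unit l r K Z W C :
  (r < K)%N -> ~~ (P %| C)%Z -> ~~ (P %| W)%Z -> Z = P ^+ l * W ->
  (P ^+ K %| Z - P ^+ r * C)%Z -> l = r /\ (P %| W - C)%Z.
Proof.
move=> rK PC PW ZE dK; have [lr lrE lrW] := dvdz_pexp_lead rK PC ZE dK.
have l_r : l = r by apply/eqP; rewrite eqn_leq lr leqNgt (contraNN lrW PW).
by split=> //; apply: lrE.
Qed.

Lemma dvdz_pexp_lead_perturb l m r K Z W V C :
  (l < m)%N -> (r < K)%N -> ~~ (P %| C)%Z -> ~~ (P %| W)%Z ->
  Z = P ^+ l * W + P ^+ m * V -> (P ^+ K %| Z - P ^+ r * C)%Z ->
  l = r /\ (P %| W - C)%Z.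
Proof.
move=> lm rK PC PW ZE dK.
have PV : (P %| P ^+ (m - l) * V)%Z by rewrite dvdz_mulr // -(subnSK lm) dvdz_expS.
have ZE' : Z = P ^+ l * (W + P ^+ (m - l) * V).
  by rewrite ZE mulrDr mulrA -exprD subnKC // ltnW.
have PW' : ~~ (P %| W + P ^+ (m - l) * V)%Z.
  by apply: contra PW => h; rewrite -(addrK (P ^+ (m - l) * V) W) rpredB.
have [lr dWC] := dvdz_pexp_lead_unit rK PC PW' ZE' dK; split=> //.
have -> : W - C = (W + P ^+ (m - l) * V - C) - P ^+ (m - l) * V by ring.
exact: rpredB dWC PV.
Qed.

Lemma dvdz_pexp_lead_high r K Z C :
  (r < K)%N -> ~~ (P %| C)%Z -> (P ^+ K %| Z)%Z -> ~ (P ^+ K %| Z - P ^+ r * C)%Z.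
Proof.
move=> rK PC /dvdzP[V ZE] dK.
rewrite mulrC in ZE; have [] := dvdz_pexp_lead rK PC ZE dK.
by rewrite leqNgt rK.
Qed.

Lemma dvdz_pexp_lead_add_high l r K Z W V C :
  (r < K)%N -> ~~ (P %| C)%Z -> ~~ (P %| W)%Z ->
  Z = P ^+ l * W + P ^+ K * V -> (P ^+ K %| Z - P ^+ r * C)%Z ->
  l = r /\ (P %| W - C)%Z.
Proof.
move=> rK PC PW ZE dK; case: (ltnP l K) => lK.
  exact: dvdz_pexp_lead_perturb lK rK PC PW ZE dK.
exfalso; apply: dvdz_pexp_lead_high rK PC _ dK.
by rewrite ZE rpredD // dvdz_mulr // dvdz_exp2l.
Qed.

Lemma dvdz_pexp_lead_add2 l1 l2 r K Z W1 W2 C :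
  (r < K)%N -> ~~ (P %| C)%Z -> ~~ (P %| W1)%Z -> ~~ (P %| W2)%Z ->
  Z = P ^+ l1 * W1 + P ^+ l2 * W2 -> (P ^+ K %| Z - P ^+ r * C)%Z ->
  [\/ l1 = r /\ (P %| W1 - C)%Z, l2 = r /\ (P %| W2 - C)%Z |
      [/\ l1 = l2, (l1 <= r)%N & (l1 < r)%N -> (P %| W1 + W2)%Z]].
Proof.
move=> rK PC PW1 PW2 ZE dK; case: (ltngtP l1 l2) => [l12|l21|l12].
- by apply: Or31; exact: dvdz_pexp_lead_perturb l12 rK PC PW1 ZE dK.
- by apply: Or32; rewrite addrC in ZE; exact: dvdz_pexp_lead_perturb l21 rK PC PW2 ZE dK.
- have ZE' : Z = P ^+ l1 * (W1 + W2) by rewrite ZE l12 mulrDr.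
  by have [l1r _ lrW] := dvdz_pexp_lead rK PC ZE' dK; apply: Or33.
Qed.

Lemma binary_rep_cases_of_congr T E r (a b X Y C : int) :
  (r <= T)%N -> ~~ (P %| a)%Z -> ~~ (P %| b)%Z -> ~~ (P %| C)%Z ->
  (P ^+ T.+1 %| a * X ^+ 2 + P ^+ E * b * Y ^+ 2 - P ^+ r * C)%Z ->
  binary_rep_cases p T E r a b C.
Proof.
move=> rT Pa Pb PC dK; have rK : (r < T.+1)%N by [].
have unit_term c Z : ~~ (P %| c)%Z -> ~~ (P %| Z)%Z -> ~~ (P %| c * Z ^+ 2)%Z.
  by move=> Pc PZ; rewrite expr2 !prime_dvdzM // !negb_or Pc PZ.
have sq_of c Z : ~~ (P %| Z)%Z -> (P %| c * Z ^+ 2 - C)%Z -> unit_sq_mod p c C.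
  by move=> PZ d; exists Z; split=> //; rewrite -opprB rpredN.
case: (dvdz_pexp_split T.+1 X) => [/dvdzP[q XE]|[al [X' [_ PX' XE]]]];
case: (dvdz_pexp_split T.+1 Y) => [/dvdzP[q' YE]|[be [Y' [_ PY' YE]]]].
- exfalso; apply: dvdz_pexp_lead_high rK PC _ dK; apply/dvdzP.
  exists (a * q ^+ 2 * P ^+ T.+1 + P ^+ E * b * q' ^+ 2 * P ^+ T.+1).
  by rewrite XE YE; ring.
- have ZE : a * X ^+ 2 + P ^+ E * b * Y ^+ 2 =
      P ^+ (E + 2 * be) * (b * Y' ^+ 2) + P ^+ T.+1 * (a * q ^+ 2 * P ^+ T.+1).
    by rewrite XE YE exprD expr_double; ring.
  have [lr dC] := dvdz_pexp_lead_add_high rK PC (unit_term _ _ Pb PY') ZE dK.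
  by apply: Or42; split; [rewrite -lr odd_add_double | exact: sq_of dC].
- have ZE : a * X ^+ 2 + P ^+ E * b * Y ^+ 2 =
      P ^+ (2 * al) * (a * X' ^+ 2) + P ^+ T.+1 * (P ^+ E * b * q' ^+ 2 * P ^+ T.+1).
    by rewrite XE YE expr_double; ring.
  have [lr dC] := dvdz_pexp_lead_add_high rK PC (unit_term _ _ Pa PX') ZE dK.
  by apply: Or41; split; [rewrite -lr mul2n odd_double | exact: sq_of dC].
- have ZE : a * X ^+ 2 + P ^+ E * b * Y ^+ 2 =
      P ^+ (2 * al) * (a * X' ^+ 2) + P ^+ (E + 2 * be) * (b * Y' ^+ 2).
    by rewrite XE YE exprD !expr_double; ring.
  case: (dvdz_pexp_lead_add2 rK PC (unit_term _ _ Pa PX') (unit_term _ _ Pb PY') ZE dK).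
  + by move=> [lr dC]; apply: Or41; split; [rewrite -lr mul2n odd_double | exact: sq_of dC].
  + by move=> [lr dC]; apply: Or42; split; [rewrite -lr odd_add_double | exact: sq_of dC].
  + move=> [l12 l1r lrW].
    have Eeven : ~~ odd E by rewrite -(odd_add_double E be) -l12 mul2n odd_double.
    case: (ltngtP (2 * al) r) l1r => [l1r _|//|<- _].
      apply: Or44; split=> //; last by exists X', Y'; split=> //; exact: lrW.
      by clear -l12 l1r rT; lia.
    by apply: Or43; rewrite mul2n odd_double.
Qed.

Lemma unit_sq_mod_square a D :
  unit_sq_mod p a 1 -> unit_sq_mod p a D -> exists t, (P %| D - t ^+ 2)%Z.
Proof.
move=> [X1 [_ d1]] [X2 [_ d2]]; exists (a * X1 * X2).
have -> : D - (a * X1 * X2) ^+ 2 = (D - a * X2 ^+ 2) + a * X2 ^+ 2 * (1 - a * X1 ^+ 2).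
  by ring.
by rewrite rpredD // dvdz_mull.
Qed.

Lemma binary_rep_cases_isotropic T E (a b C D : int) : (0 < T)%N ->
  (forall t, ~ (P %| D - t ^+ 2)%Z) ->
  binary_rep_cases p T E T a b C -> binary_rep_cases p T E T.-1 a b 1 ->
  binary_rep_cases p T E T.-1 a b D ->
  [/\ ~~ odd E, (E <= T)%N & isotropic_mod p a b].
Proof.
move=> T_gt0 Dns cT c1 cD.
have oddT : odd T = ~~ odd T.-1 by rewrite -{1}(prednK T_gt0).
have sq_absurd c : unit_sq_mod p c 1 -> unit_sq_mod p c D -> False.
  by move=> s1 sD; have [t] := unit_sq_mod_square s1 sD; exact: Dns.
(* 1 and D cannot both be a unit square times a, nor both times b; every other
   combination contradicts the parities of T, T - 1 and E. *)
case: c1 => [[e1 s1]|[e1 s1]|[e1 f1]|//]; case: cD => [[e2 s2]|[e2 s2]|[e2 f2]|//];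
  try by case: (sq_absurd _ s1 s2).
all: case: cT => [[eT _]|[eT _]|[eT fT]|//]; rewrite oddT in eT.
all: by destruct (odd T.-1); destruct (odd E).
Qed.

End PadicValuation.

Definition isotropic_unit_at (p k : nat) (d : nat -> nat -> int) (i : nat) : Prop :=
  exists z : nat -> nat -> int, [/\ forall j, (j < k)%N -> is_zp p (z j),
    zp_eq p (diag_Q k d z) (zp_of_int 0) & zp_unit p (z i)].

Lemma sum_diag_sq_add_basis k (D Z : nat -> int) (c q : int) i0 : (i0 < k)%N ->
  \sum_(i < k) D i * (c * Z i + (if (i : nat) == i0 then q else 0)) ^+ 2 =
  c ^+ 2 * (\sum_(i < k) D i * Z i ^+ 2) + D i0 * (2 * c * Z i0 * q + q ^+ 2).
Proof.
move=> ik; rewrite (bigD1 (Ordinal ik)) //= eqxx [in RHS](bigD1 (Ordinal ik)) //= mulrDr.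
rewrite mulr_sumr (eq_bigr (fun i : 'I_k => c ^+ 2 * (D i * Z i ^+ 2))); first by ring.
move=> i /negbTE; rewrite -val_eqE /= => ->; rewrite addr0; ring.
Qed.

Section DiagonalForms.

Variable p : nat.
Local Notation P := (p%:Z).

Lemma represents_ext k d (a b : nat -> int) :
  (forall n, a n = b n) -> represents p k d a -> represents p k d b.
Proof. by move=> ab [x [hx hq]]; exists x; split=> // n; rewrite -ab; exact: hq. Qed.

Lemma represents_scale_sq k d a m :
  represents p k d a -> represents p k d (fun n => P ^+ (2 * m) * a n).
Proof.
move=> [x [hx /zp_eqP hq]]; exists (fun i n => P ^+ m * x i n); split.
  by move=> i ik; apply: is_zpM (is_zp_const _ _) (hx _ ik).
apply/zp_eqP => n; rewrite /diag_Q.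
have -> : \sum_(i < k) d i n * (P ^+ m * x i n) ^+ 2 - P ^+ (2 * m) * a n =
    P ^+ (2 * m) * (diag_Q k d x n - a n).
  rewrite /diag_Q mulrBr mulr_sumr expr_double.
  by congr (_ - _); apply: eq_bigr => i _; ring.
exact: dvdz_mull.
Qed.

Lemma represents_binary_mod k e eps T a : (2 <= k)%N -> e 0%N = 0%N ->
  (forall i, (2 <= i)%N -> (i < k)%N -> (T < e i)%N) ->
  represents p k (diag_entries p e eps) a ->
  exists X Y,
    (P ^+ T.+1 %| eps 0%N T.+1 * X ^+ 2 + P ^+ e 1%N * eps 1%N T.+1 * Y ^+ 2 - a T.+1)%Z.
Proof.
move=> k2 e0 eT [x [_ /zp_eqP /(_ T.+1) dQ]]; exists (x 0%N T.+1), (x 1%N T.+1); move: dQ.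
rewrite /diag_Q -(subnKC k2) big_split_ord /= !big_ord_recl big_ord0 addr0 /=.
rewrite /diag_entries /zp_mul /zp_of_int e0 expn0 mul1r natz_expn.
set R := \sum_(i < k - 2) _ => dQ.
have dR : (P ^+ T.+1 %| R)%Z.
  apply: rpred_sum => i _; rewrite natz_expn; apply/dvdz_mulr/dvdz_mulr/dvdz_exp2l.
  by apply: eT; rewrite ?leq_addr // -ltn_subRL.
have -> : eps 0%N T.+1 * x 0%N T.+1 ^+ 2 + P ^+ e 1%N * eps 1%N T.+1 * x 1%N T.+1 ^+ 2 - a T.+1 =
    (eps 0%N T.+1 * x 0%N T.+1 ^+ 2 + P ^+ e 1%N * eps 1%N T.+1 * x 1%N T.+1 ^+ 2 + R - a T.+1)
    - R by ring.
exact: rpredB dQ dR.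
Qed.

Lemma diag_Q_congr k d z n m m' :
  (forall i, (i < k)%N -> is_zp p (d i)) -> (forall i, (i < k)%N -> is_zp p (z i)) ->
  (n <= m)%N -> (n <= m')%N ->
  (P ^+ n %| \sum_(i < k) d i m * z i m' ^+ 2 - diag_Q k d z n)%Z.
Proof.
move=> hd hz nm nm'; rewrite /diag_Q -sumrB; apply: rpred_sum => i _.
have dz := is_zp_dvd_sub (hz i (ltn_ord i)) nm'.
by rewrite !expr2; do 2?apply: dvdz_mul_congr => //; apply: is_zp_dvd_sub nm; apply: hd.
Qed.

Lemma isotropic_unit_at_pad k k' d i : (k' <= k)%N -> (i < k')%N ->
  isotropic_unit_at p k' d i -> isotropic_unit_at p k d i.
Proof.
move=> kk ik [z [hz hQ uz]]; exists (fun j n => if (j < k')%N then z j n else 0); split.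
- by move=> j _; case jk: (j < k')%N; [exact: hz | exact: is_zp_const].
- move=> n; rewrite /diag_Q.
  rewrite (@big_ord_trunc _ k k' (fun j => d j n * (if (j < k')%N then z j n else 0) ^+ 2)) //.
    rewrite (eq_bigr (fun j : 'I_k' => d j n * z j n ^+ 2)); first exact: hQ.
    by move=> j _; rewrite ltn_ord.
  by move=> j kj; rewrite ltnNge kj expr2 !mulr0.
- by rewrite ik.
Qed.

Hypothesis p_prime : prime p.

Lemma isotropic_primitive k d : (forall i, (i < k)%N -> is_zp p (d i)) ->
  isotropic p k d -> exists2 i, (i < k)%N & isotropic_unit_at p k d i.
Proof.
move=> hd [x [hx [[i1 [ik1 [n1 hn1]]] /zp_eqP hQ]]].
pose divisible m := all (fun i => (P ^+ m %| x i m)%Z) (iota 0 k).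
have [mu [dmu ndmu]] : exists mu, divisible mu /\ ~~ divisible mu.+1.
  apply: (@last_true_before divisible n1); first by apply/allP => i _; rewrite expr0 dvd1z.
  by apply: contra hn1 => /allP/(_ i1); rewrite mem_iota ik1 natz_expn; apply.
have [i0 ik0 hn0] : exists2 i0, (i0 < k)%N & ~~ (P ^+ mu.+1 %| x i0 mu.+1)%Z.
  by move/allPn: ndmu => [i]; rewrite mem_iota => ik; exists i.
pose z i n := (x i (n + mu)%N %/ P ^+ mu)%Z.
have hz i : (i < k)%N -> is_zp p (z i) /\ forall n, x i (n + mu)%N = P ^+ mu * z i n.
  move=> ik; apply: is_zp_div_pexp => //; first exact: hx.
  by move/allP: dmu => /(_ i); rewrite mem_iota ik; apply.
exists i0 => //; exists z; split; first by move=> j /hz[].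
- apply/zp_eqP => n; rewrite subr0.
  have := hQ (n + 2 * mu)%N; rewrite subr0 /diag_Q.
  rewrite (eq_bigr (fun i : 'I_k => P ^+ (2 * mu) * (d i (n + 2 * mu)%N * z i (n + mu)%N ^+ 2)));
    last by move=> i _; rewrite mul2n -addnn addnA (hz _ (ltn_ord i)).2 exprD; ring.
  rewrite -mulr_sumr exprD mulrC dvdz_mul2r ?expz_prime_neq0 // => dQ.
  rewrite -(subKr (\sum_(i < k) d i (n + 2 * mu)%N * z i (n + mu)%N ^+ 2)
                  (\sum_(i < k) d i n * z i n ^+ 2)).
  by apply: rpredB dQ _; apply: diag_Q_congr; rewrite ?leq_addr // => i /hz[].
- split; first by have [] := hz _ ik0.
  apply: contra hn0 => Pz; rewrite -[X in x i0 X]add1n; have [_ ->] := hz _ ik0.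
  by rewrite exprSr; apply: dvdz_mul (dvdzz _) Pz.
Qed.

Hypothesis p_odd : odd p.

Lemma represents_of_isotropic_unit k e eps i t (s : nat -> int) :
  (i < k)%N -> zp_unit p (eps i) -> isotropic_unit_at p k (diag_entries p e eps) i ->
  (e i <= t)%N -> is_zp p s -> represents p k (diag_entries p e eps) (fun n => P ^+ t * s n).
Proof.
move=> ik ueps [z [hz /zp_eqP hQ uz]] /subnKC <-; set j := (t - e i)%N => hs.
have [h [hh gh]] : exists h, is_zp p h /\ forall n, (P ^+ n %| 2 * eps i n * z i n * h n - 1)%Z.
  apply: zp_unit_inv => //; apply: (@zp_unitM _ _ (fun n => 2 * eps i n)) uz => //.
  by apply: (@zp_unitM _ _ (fun=> 2)) ueps => //; exact/zp_unit_const/prime_ndvdz2.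
(* Q(c z + p^j u_i) = c^2 Q(z) + p^t eps_i (2 c z_i + p^j), and the choice
   c = (s - p^j eps_i) / (2 eps_i z_i) turns the last term into p^t s. *)
pose c n := (s n - P ^+ j * eps i n) * h n.
have hc : is_zp p c.
  by apply: is_zpM hh; apply: is_zpD hs (is_zpN (is_zpM (is_zp_const _ _) ueps.1)).
exists (fun l n => c n * z l n + (if l == i then P ^+ j else 0)); split.
  by move=> l lk; apply: is_zpD (is_zpM hc (hz _ lk)) (is_zp_const _ _).
apply/zp_eqP => n; have := hQ n; rewrite /diag_Q /diag_entries /zp_mul /zp_of_int subr0.
rewrite (sum_diag_sq_add_basis (fun l => (p ^ e l)%:Z * eps l n) (fun l => z l n)) //.
rewrite natz_expn; set Qz := \sum_(l < k) _ => dQ.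
have -> : c n ^+ 2 * Qz + P ^+ e i * eps i n * (2 * c n * z i n * P ^+ j + P ^+ j ^+ 2)
    - P ^+ (e i + j) * s n =
    c n ^+ 2 * Qz + P ^+ (e i + j) * ((s n - P ^+ j * eps i n) * (2 * eps i n * z i n * h n - 1)).
  by rewrite exprD /c; ring.
by apply: rpredD; [apply: dvdz_mull | apply/dvdz_mull/dvdz_mull].
Qed.

Lemma isotropic_unit_at_binary e eps n :
  zp_unit p (eps 0%N) -> zp_unit p (eps 1%N) -> e 0%N = 0%N -> ~~ odd (e 1%N) -> (0 < n)%N ->
  isotropic_mod p (eps 0%N n) (eps 1%N n) -> isotropic_unit_at p 2 (diag_entries p e eps) 1.
Proof.
move=> u0 u1 e0 Eeven n_gt0 [X [Y [PX PY dXY]]].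
have [h [hh h0]] := zp_unit_inv p_prime u0.
have [v [_ hv]] := zp_unit_inv p_prime (zp_unit_const PY).
have Yv : (P %| Y * v 1%N - 1)%Z by have := hv 1%N; rewrite expr1.
have h01 : (P %| eps 0%N 1%N * h 1%N - 1)%Z by have := h0 1%N; rewrite expr1.
(* The vector (p^(e_1 / 2) lam, 1) with lam^2 = - eps_1 / eps_0 is isotropic. *)
pose c m := - eps 1%N m * h m.
have uc : zp_unit p c.
  split; first exact: is_zpM (is_zpN u1.1) hh.
  rewrite /c prime_dvdzM // negb_or rpredN u1.2 /=.
  apply: contra (prime_ndvdz1 p_prime) => Ph.
  by have := rpredB (dvdz_mull (eps 0%N 1%N) Ph) h01; rewrite subKr.
have dXY1 : (P %| eps 0%N 1%N * X ^+ 2 + eps 1%N 1%N * Y ^+ 2)%Z.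
  have := is_zp_dvd_sub u0.1 n_gt0; have := is_zp_dvd_sub u1.1 n_gt0; rewrite !expr1 => d1 d0.
  have -> : eps 0%N 1%N * X ^+ 2 + eps 1%N 1%N * Y ^+ 2 = (eps 0%N n * X ^+ 2 + eps 1%N n * Y ^+ 2)
      - (eps 0%N n - eps 0%N 1%N) * X ^+ 2 - (eps 1%N n - eps 1%N 1%N) * Y ^+ 2 by ring.
  by apply: rpredB; [apply: rpredB dXY _ |]; apply: dvdz_mulr.
have dc : (P %| c 1%N - (X * v 1%N) ^+ 2)%Z.
  have -> : c 1%N - (X * v 1%N) ^+ 2 =
      - h 1%N * v 1%N ^+ 2 * (eps 0%N 1%N * X ^+ 2 + eps 1%N 1%N * Y ^+ 2)
      + eps 1%N 1%N * h 1%N * (1 + Y * v 1%N) * (Y * v 1%N - 1)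
      + X ^+ 2 * v 1%N ^+ 2 * (eps 0%N 1%N * h 1%N - 1) by rewrite /c; ring.
  by rewrite !rpredD // dvdz_mull.
have [lam [hlam /zp_eqP lam2]] := zp_square_lift p_prime p_odd uc dc.
have EE : P ^+ e 1%N = P ^+ (e 1%N)./2 * P ^+ (e 1%N)./2.
  by rewrite -expr_double mul2n -[in LHS](odd_double_half (e 1%N)) (negbTE Eeven).
exists (fun i m => if i == 0%N then P ^+ (e 1%N)./2 * lam m else 1); split.
- move=> [|i] _ /=; [exact: is_zpM (is_zp_const _ _) hlam | exact: is_zp_const].
- apply/zp_eqP => m; rewrite /diag_Q !big_ord_recl big_ord0 /= /diag_entries /zp_mul /zp_of_int.
  rewrite e0 expn0 natz_expn.
  have -> : 1 * eps 0%N m * (P ^+ (e 1%N)./2 * lam m) ^+ 2 + (P ^+ e 1%N * eps 1%N m * 1 ^+ 2 + 0)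
      - 0 = P ^+ e 1%N * (eps 0%N m * (lam m * lam m - c m) - eps 1%N m * (eps 0%N m * h m - 1)).
    by rewrite EE /c; ring.
  by apply/dvdz_mull/rpredB; apply: dvdz_mull; [exact: lam2 | exact: h0].
- exact/zp_unit_const/prime_ndvdz1.
Qed.

End DiagonalForms.

Definition sc_unit (Delta : nat -> int) (s : 'I_4) : nat -> int :=
  if odd s then Delta else zp_of_int 1.

Lemma sc_valE p Delta (s : 'I_4) u n :
  zp_mul (sc_val p Delta s) (zp_of_int (p ^ (2 * u))%:Z) n =
  p%:Z ^+ (sc_ord s + 2 * u) * sc_unit Delta s n.
Proof.
rewrite /sc_unit /sc_val /sc_ord /zp_mul /zp_of_int natz_expn exprD.
by case: s => [[|[|[|[|m]]]] hs] //=; rewrite ?expr0 ?expr1; ring.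
Qed.

Lemma sc_ord_le1 (s : 'I_4) : (sc_ord s <= 1)%N.
Proof. by rewrite /sc_ord; case: ifP. Qed.

Lemma sc_complement (s0 : 'I_4) : exists sp so1 so2 : 'I_4,
  [/\ sp != s0, so1 != s0, so2 != s0, sc_ord sp = sc_ord s0 &
      [/\ (sc_ord so1 + sc_ord s0 = 1)%N, (sc_ord so2 + sc_ord s0 = 1)%N,
          ~~ odd so1 & odd so2]].
Proof.
case: s0 => [[|[|[|[|m]]]] hs] //.
- by exists (Ordinal (isT : (1 < 4)%N)), (Ordinal (isT : (2 < 4)%N)), (Ordinal (isT : (3 < 4)%N)).
- by exists (Ordinal (isT : (0 < 4)%N)), (Ordinal (isT : (2 < 4)%N)), (Ordinal (isT : (3 < 4)%N)).
- by exists (Ordinal (isT : (3 < 4)%N)), (Ordinal (isT : (0 < 4)%N)), (Ordinal (isT : (1 < 4)%N)).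
- by exists (Ordinal (isT : (2 < 4)%N)), (Ordinal (isT : (0 < 4)%N)), (Ordinal (isT : (1 < 4)%N)).
Qed.

Lemma leq_of_leqS_odd v r : odd v = odd r -> (v <= r.+1)%N -> (v <= r)%N.
Proof.
move=> par; rewrite leq_eqVlt ltnS => /orP[/eqP vr|//].
by move: par; rewrite vr /=; case: (odd r).
Qed.

Section RepresentedSquareClasses.

Variables (p k : nat) (Delta : nat -> int) (e : nat -> nat) (eps : nat -> nat -> int).
Hypotheses (p_prime : prime p) (Delta_unit : zp_unit p Delta).
Local Notation L := (diag_entries p e eps).
Local Notation P := (p%:Z).

Lemma is_zp_sc_unit s : is_zp p (sc_unit Delta s).
Proof. by rewrite /sc_unit; case: ifP => _; [exact: Delta_unit.1 | exact: is_zp_const]. Qed.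

Lemma sc_unit_ndvd s n : (0 < n)%N -> ~~ (P %| sc_unit Delta s n)%Z.
Proof.
rewrite /sc_unit; case: ifP => _ n_gt0; first exact: zp_unit_ndvd.
exact: prime_ndvdz1.
Qed.

Lemma nu_s_spec_represents s v t : nu_s_spec p k L Delta s v ->
  (v <= t)%N -> odd t = odd (sc_ord s) -> represents p k L (fun n => P ^+ t * sc_unit Delta s n).
Proof.
move=> [u [vE [rep _]]] vt par.
have [h ->] : exists h, t = (v + 2 * h)%N.
  have ev : ~~ odd (t - v) by rewrite oddB // par vE odd_add_double addbb.
  have := odd_double_half (t - v); rewrite (negbTE ev) add0n => half.
  by exists (t - v)./2; rewrite mul2n half subnKC.
apply: represents_ext (represents_scale_sq h rep) => n.
by rewrite sc_valE vE !exprD; ring.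
Qed.

Hypotheses (k_ge2 : (2 <= k)%N) (e0 : e 0%N = 0%N)
  (eps_unit : forall i, (i < k)%N -> zp_unit p (eps i)).

Lemma binary_rep_cases_of_nu s v r T :
  (forall i, (2 <= i)%N -> (i < k)%N -> (T < e i)%N) -> nu_s_spec p k L Delta s v ->
  (v <= r.+1)%N -> (r <= T)%N -> odd r = odd (sc_ord s) ->
  binary_rep_cases p T (e 1%N) r (eps 0%N T.+1) (eps 1%N T.+1) (sc_unit Delta s T.+1).
Proof.
move=> eT nu vr rT par; have [u [vE _]] := nu.
have {}vr : (v <= r)%N by apply: leq_of_leqS_odd vr; rewrite vE odd_add_double.
have [X [Y dXY]] := represents_binary_mod k_ge2 e0 eT (nu_s_spec_represents nu vr par).
apply: binary_rep_cases_of_congr rT _ _ _ dXY => //; last exact: sc_unit_ndvd.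
  by apply: zp_unit_ndvd => //; apply: eps_unit; apply: leq_trans k_ge2.
exact: zp_unit_ndvd (eps_unit k_ge2) _.
Qed.

Hypotheses (p_odd : odd p) (Delta_nonsquare : ~ zp_square p Delta)
  (e_mono : forall i j, (i <= j)%N -> (j < k)%N -> (e i <= e j)%N).

Lemma represents_sc_of_binary_part s0 t :
  (forall i, (2 <= i)%N -> (i < k)%N -> (t < e i)%N) -> odd t = odd (sc_ord s0) ->
  (forall s, s != s0 -> exists2 v, nu_s_spec p k L Delta s v & (v <= t)%N) ->
  represents p k L (fun n => P ^+ t * sc_unit Delta s0 n).
Proof.
move=> et par rest.
have [sp [so1 [so2 [sp_ne so1_ne so2_ne ordp [ord1 ord2 odd1 odd2]]]]] := sc_complement s0.
have [v1 nu1 v1t] := rest so1 so1_ne; have [v2 nu2 v2t] := rest so2 so2_ne.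
have [vp nup vpt] := rest sp sp_ne.
have t_gt0 : (0 < t)%N.
  have [u1 [v1E _]] := nu1; case: (posnP t) => [t0|//]; move: par ord1 v1t.
  rewrite t0 v1E; case: (sc_ord s0) (sc_ord_le1 s0) => [|[|//]] //= _ _; lia.
have par' s : (sc_ord s + sc_ord s0 = 1)%N -> odd t.-1 = odd (sc_ord s).
  move=> ord; have : odd (sc_ord s + sc_ord s0) by rewrite ord.
  by rewrite oddD -par -(prednK t_gt0) /=; case: (odd t.-1); case: (odd (sc_ord s)).
have parp : odd t = odd (sc_ord sp) by rewrite ordp.
have cp := binary_rep_cases_of_nu et nup (leqW vpt) (leqnn t) parp.
have c1 := binary_rep_cases_of_nu et nu1 (leq_trans v1t (leqSpred t)) (leq_pred t) (par' _ ord1).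
have c2 := binary_rep_cases_of_nu et nu2 (leq_trans v2t (leqSpred t)) (leq_pred t) (par' _ ord2).
rewrite /sc_unit (negbTE odd1) in c1; rewrite /sc_unit odd2 in c2.
have [Eeven Et iso] := binary_rep_cases_isotropic t_gt0
  (zp_nonsquare_mod p_prime p_odd Delta_unit Delta_nonsquare (ltn0Sn t)) cp c1 c2.
apply: (represents_of_isotropic_unit p_prime p_odd k_ge2 (eps_unit k_ge2) _ Et (is_zp_sc_unit s0)).
apply: isotropic_unit_at_pad k_ge2 (ltnSn 1) _.
have eps0_unit := eps_unit (ltnW k_ge2); have eps1_unit := eps_unit k_ge2.
exact: (isotropic_unit_at_binary p_prime p_odd eps0_unit eps1_unit e0 Eeven (ltn0Sn t) iso).
Qed.

Lemma represents_sc_of_rest s0 t : (3 <= k)%N -> isotropic p 3 L -> odd t = odd (sc_ord s0) ->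
  (forall s, s != s0 -> exists2 v, nu_s_spec p k L Delta s v & (v <= t)%N) ->
  represents p k L (fun n => P ^+ t * sc_unit Delta s0 n).
Proof.
move=> k_ge3 iso par rest.
have L3 i : (i < 3)%N -> is_zp p (L i).
  by move=> i3; apply: is_zpM (is_zp_const _ _) (eps_unit (leq_trans i3 k_ge3)).1.
have [i0 i0_lt3 iso0] := isotropic_primitive p_prime L3 iso.
have i0k : (i0 < k)%N := leq_trans i0_lt3 k_ge3.
have isok := isotropic_unit_at_pad k_ge3 i0_lt3 iso0.
case: (leqP (e i0) t) => [ei0t|t_ei0].
  exact: (represents_of_isotropic_unit p_prime p_odd i0k (eps_unit i0k) isok ei0t
            (is_zp_sc_unit s0)).
apply: represents_sc_of_binary_part par rest => i i_ge2 ik.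
by apply: leq_trans t_ei0 (e_mono _ ik); apply: leq_trans i_ge2; rewrite -ltnS.
Qed.

End RepresentedSquareClasses.

Theorem lemma2p6 (p k : nat) (Delta : nat -> int) (e : nat -> nat)
    (eps : nat -> nat -> int) (nu : 'I_4 -> nat) :
  prime p -> odd p -> (4 <= k)%N ->
  zp_unit p Delta -> ~ zp_square p Delta ->
  (forall i, (i < k)%N -> zp_unit p (eps i)) ->
  e 0%N = 0%N ->
  (forall i j, (i <= j)%N -> (j < k)%N -> (e i <= e j)%N) ->
  (forall s : 'I_4, nu_s_spec p k (diag_entries p e eps) Delta s (nu s)) ->
  isotropic p 3 (diag_entries p e eps) ->
  forall s0 : 'I_4, (forall s : 'I_4, (nu s <= nu s0)%N) ->
    (nu s0 <= (\max_(s < 4 | s != s0) nu s) + 1)%N.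
Proof.
move=> p_prime p_odd k_ge4 Du Dns eps_unit e0 e_mono nuP iso s0 _.
set M := \max_(s < 4 | s != s0) nu s.
have nuM s : s != s0 -> (nu s <= M)%N by move=> ne; exact: leq_bigmax_cond.
rewrite leqNgt; apply/negP => gap.
have [u0 [nu0E [_ u0_min]]] := nuP s0.
have u0_gt0 : (0 < u0)%N by move: (sc_ord_le1 s0) gap; rewrite nu0E; clear; lia.
apply: (u0_min u0.-1); first by rewrite ltn_predL.
apply: represents_ext (fun n => esym (sc_valE p Delta s0 u0.-1 n)) _.
have k_ge2 : (2 <= k)%N by apply: leq_trans k_ge4.
apply: (represents_sc_of_rest p_prime Du k_ge2 e0 eps_unit p_odd Dns e_mono (ltnW k_ge4) iso).
- exact: odd_add_double.
- move=> s ne; exists (nu s) => //; move: (nuM s ne) gap; rewrite nu0E.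
  by clear; lia.
Qed.
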